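(* Let $k\geq 29$ and let $Q$ be the graph constructed below. Then $|V(Q)|=2k+1$ and $Q$ has no Hamiltonian path.
   Context: Fix an integer $k\geq 29$ and set $l=2\lfloor (k-12)/17\rfloor$, $m=\lfloor (2k-l+1)/8\rfloor$, $r=2k+1-l-8m$ (so $r\in\{1,3,5,7\}$). Let $H$ be the graph with vertex set $\{u,v,a,b,c,d,e,f\}$ and edge set $\{ub,ud,vc,ve,ab,ac,fd,fe,bc,ce,ed,db\}$. Take $m$ disjoint copies $H_1,\ldots,H_m$ of $H$, and let $u_i,v_i$ be the vertices of $H_i$ corresponding to $u,v$. Let $U=\{u_i,v_i:1\leq i\leq m\}$ and let $R$ be a set of $r$ new vertices. Let $T$ be the graph obtained from the disjoint union $H_1\cup\cdots\cup H_m$ by adding the vertices of $R$ and joining every pair of distinct vertices of $U\cup R$ by an edge (so $U\cup R$ becomes a clique). Let $L$ be a complete graph on $l$ vertices, and let $Q=L+T$ be the join of $L$ and $T$ (every vertex of $L$ adjacent to every vertex of $T$). *)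

From mathcomp Require Import all_boot.
Set Implicit Arguments. Unset Strict Implicit. Unset Printing Implicit Defensive.

Definition lpar (k : nat) : nat := 2 * ((k - 12) %/ 17).
Definition mpar (k : nat) : nat := (2 * k - lpar k + 1) %/ 8.
Definition rpar (k : nat) : nat := 2 * k + 1 - lpar k - 8 * mpar k.

(* Vertices of H, encoded as 'I_8: u=0, v=1, a=2, b=3, c=4, d=5, e=6, f=7. *)
Definition H_edges : seq (nat * nat) :=
  [:: (0,3); (0,5); (1,4); (1,6); (2,3); (2,4); (7,5); (7,6);
      (3,4); (4,6); (6,5); (5,3)].

Definition H_adj (p q : 'I_8) : bool :=
  ((val p, val q) \in H_edges) || ((val q, val p) \in H_edges).

Definition isUV (p : 'I_8) : bool := (val p == 0) || (val p == 1).

(* Vertex set of Q = L + T :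
   inl (inl x)      : vertex x of L (l vertices)
   inl (inr (i,p))  : vertex p of copy H_i (m copies of 8 vertices)
   inr z            : vertex z of R (r vertices) *)
Definition QVert (k : nat) : finType :=
  ('I_(lpar k) + ('I_(mpar k) * 'I_8) + 'I_(rpar k))%type.

Definition Q_adj (k : nat) : rel (QVert k) := fun x y =>
  (x != y) &&
  match x, y with
  | inl (inl _), _ => true
  | _, inl (inl _) => true
  | inl (inr (i, p)), inl (inr (j, q)) =>
      ((i == j) && H_adj p q) || (isUV p && isUV q)
  | inl (inr (_, p)), inr _ => isUV p
  | inr _, inl (inr (_, q)) => isUV q
  | inr _, inr _ => true
  end.

Definition hamiltonian_path (T : finType) (e : rel T) (s : seq T) : Prop :=
  [/\ uniq s, forall v : T, v \in s & sorted e s].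

(* Removing the l vertices of L cuts a Hamiltonian path of Q into at most l + 1
   segments, each a path of T, so at most 2 + 2l vertices ("breakpoints") are an
   end of the path or a path-neighbour of a vertex of L.  The internal vertices
   a, ..., f of a copy H_i are adjacent in T only to vertices of H_i, so if none of
   them is a breakpoint, the path edges inside H_i form a linear forest of H + uv in
   which a, ..., f all have degree 2, and no such forest exists.  Hence every copy
   contains a breakpoint and m <= 2 + 2l, which fails for k >= 29. *)

From mathcomp Require Import all_boot zify.
Set Implicit Arguments. Unset Strict Implicit. Unset Printing Implicit Defensive.

Section PathEdges.
Variable T : eqType.
Implicit Types (s t : seq T) (a : pred T).

Definition path_edges s : seq (T * T) := zip s (behead s).

Lemma count_zip_fst a s t : count (fun e => a e.1) (zip s t) <= count a s.
Proof. by elim: s t => [|x s IH] [|y t] //=; rewrite leq_add2l. Qed.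

Lemma count_zip_snd a s t : count (fun e => a e.2) (zip s t) <= count a t.
Proof. by elim: s t => [|x s IH] [|y t] //=; rewrite leq_add2l. Qed.

Lemma count_behead a s : count a (behead s) <= count a s.
Proof. by case: s => //= x s; apply: leq_addl. Qed.

Lemma count_path_edges_within a s :
  count (fun e => a e.1 && a e.2) (path_edges s) <= (count a s).-1.
Proof.
rewrite /path_edges; elim: s => // x [|y s] IH //=.
by move: IH => /=; case: (a x); case: (a y) => /=; lia.
Qed.

Lemma uniq_path_edges s : uniq s -> uniq (path_edges s).
Proof. exact: zip_uniql. Qed.

Lemma path_edges_sorted (e : rel T) s x y : sorted e s -> (x, y) \in path_edges s -> e x y.
Proof.
rewrite /path_edges; case: s => // z s; elim: s z => // z' s IH z /= /andP[ezz' ps].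
by rewrite inE => /orP[/eqP[-> ->] | /(IH _ ps)].
Qed.

Lemma path_edges_pred x s : x \in s -> x != head x s -> exists y, (y, x) \in path_edges s.
Proof.
rewrite /path_edges; case: s => // z s; elim: s z => [|z' s IH] z /=.
  by rewrite inE => /eqP ->; rewrite eqxx.
rewrite inE => /orP[/eqP -> | xs]; first by rewrite eqxx.
move=> _; have [/eqP -> | xz'] := boolP (x == z'); first by exists z; rewrite inE eqxx.
by have [y hy] := IH z' xs xz'; exists y; rewrite inE hy orbT.
Qed.

Lemma path_edges_succ x s : x \in s -> x != last x s -> exists y, (x, y) \in path_edges s.
Proof.
rewrite /path_edges; case: s => // z s; elim: s z => [|z' s IH] z /=.
  by rewrite inE => /eqP ->; rewrite eqxx.
rewrite inE => /orP[/eqP -> | xs] xlast; first by exists z'; rewrite inE eqxx.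
by have [y hy] := IH z' xs xlast; exists y; rewrite inE hy orbT.
Qed.

Lemma count_le_size_uniq a s t : uniq s -> {in s, forall x, a x -> x \in t} -> count a s <= size t.
Proof.
move=> us sub; rewrite -size_filter; apply: uniq_leq_size; first exact: filter_uniq.
by move=> x; rewrite mem_filter => /andP[/sub]; apply.
Qed.

Lemma count_ge2 a s u v :
  uniq s -> u \in s -> v \in s -> u != v -> a u -> a v -> 2 <= count a s.
Proof.
move=> us us_u us_v uv au av; rewrite -size_filter.
apply: (uniq_leq_size (s1 := [:: u; v])); first by rewrite /= inE uv.
by move=> w; rewrite !inE mem_filter => /orP[] /eqP ->; apply/andP.
Qed.

End PathEdges.

(* Within one copy, Q induces H together with the edge uv = (0, 1) of the clique on U. *)
Definition HUV_edges : seq (nat * nat) := (0, 1) :: H_edges.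

Definition HUV_adj (ab : nat * nat) : bool :=
  (ab \in HUV_edges) || ((ab.2, ab.1) \in HUV_edges).

Definition same_edge (e ab : nat * nat) : bool := (ab == e) || (ab == (e.2, e.1)).

Definition edge_mult (F : seq (nat * nat)) (e : nat * nat) : nat := count (same_edge e) F.

Definition weight (x : nat * nat -> nat) (P : pred (nat * nat)) : nat :=
  \sum_(e <- HUV_edges | P e) x e.

Definition incident (p : nat) (ab : nat * nat) : bool := (ab.1 == p) || (ab.2 == p).

Definition within (X : seq nat) (ab : nat * nat) : bool := (ab.1 \in X) && (ab.2 \in X).

Lemma HUV_adj_unique ab : HUV_adj ab -> count (same_edge^~ ab) HUV_edges = 1.
Proof.
have check : all (fun ab => (count (same_edge^~ ab) HUV_edges == 1) &&
                            (count (same_edge^~ (ab.2, ab.1)) HUV_edges == 1)) HUV_edges by [].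
by case: ab => a b /orP[] /(allP check) /andP[/eqP ? /eqP ?].
Qed.

Lemma weight_edge_mult (P : pred (nat * nat)) F :
  (forall a b, P (b, a) = P (a, b)) -> all HUV_adj F -> weight (edge_mult F) P = count P F.
Proof.
move=> Psym; elim: F => [_ | ab F IH /= /andP[adj /IH <-]]; first by rewrite /weight big1.
rewrite /weight /edge_mult /= big_split /=; congr (_ + _).
rewrite (eq_bigr (fun e => if same_edge e ab then 1 else 0)); last by move=> e _; case: same_edge.
rewrite -big_mkcondr sum1_count.
rewrite (eq_count (a2 := fun e => P ab && same_edge e ab)).
  by case: (P ab); [exact: HUV_adj_unique | exact: count_pred0].
case: ab {adj} => a b [c d] /=.
case/boolP: (same_edge (c, d) (a, b)) => [/orP[] /eqP[-> ->] // | _]; last by rewrite !andbF.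
by rewrite Psym.
Qed.

(* Degree 2 at a and f forces ab, ac, fd, fe; acyclicity then excludes bc and de and
   leaves at most one of bd, ce, and every completion closes a cycle through u or v. *)
Lemma HUV_no_internal_cover (x : nat * nat -> nat) :
  (forall p, 2 <= p < 8 -> 2 <= weight x (incident p)) ->
  (forall X, weight x (within X) <= (size X).-1) -> False.
Proof.
move=> deg2 forest.
have := deg2 2 erefl; have := deg2 3 erefl; have := deg2 4 erefl.
have := deg2 5 erefl; have := deg2 6 erefl; have := deg2 7 erefl.
have := forest [:: 0; 1; 2; 3; 4; 5; 6; 7]; have := forest [:: 2; 3; 4; 5; 6; 7].
have := forest [:: 0; 2; 3; 4; 5; 6; 7]; have := forest [:: 1; 2; 3; 4; 5; 6; 7].
have := forest [:: 2; 3; 4]; have := forest [:: 5; 6; 7].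
have := forest [:: 2; 3]; have := forest [:: 2; 4]; have := forest [:: 5; 7]; have := forest [:: 6; 7].
by rewrite /weight unlock /=; lia.
Qed.

Section Construction.
Variable k : nat.
Local Notation V := (QVert k).

Definition copy_vertex (i : 'I_(mpar k)) (p : 'I_8) : V := inl (inr (i, p)).
Definition in_L (x : V) : bool := if x is inl (inl _) then true else false.
Definition copy_of (x : V) : option 'I_(mpar k) :=
  if x is inl (inr (i, _)) then Some i else None.
Definition in_copy (i : 'I_(mpar k)) (x : V) : bool := copy_of x == Some i.
Definition position (x : V) : nat := if x is inl (inr (_, p)) then val p else 0.

Lemma in_copyP i x : in_copy i x -> exists p, x = copy_vertex i p.
Proof. by case: x => [[l | [j p]] | r] //= /eqP[->]; exists p. Qed.

Lemma Q_adj_irrefl (x : V) : ~~ Q_adj x x.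
Proof. by rewrite /Q_adj eqxx. Qed.

Lemma Q_adj_internal i (p : 'I_8) (y : V) : 2 <= p -> ~~ in_L y ->
  Q_adj y (copy_vertex i p) || Q_adj (copy_vertex i p) y -> in_copy i y.
Proof.
move=> p_int; have nUV : isUV p = false by case: p p_int => [[|[|?]] ?].
case: y => [[l | [j q]] | r] //= _; rewrite /Q_adj /= nUV ?andbF ?orbF //.
by rewrite /in_copy /= => /orP[] /andP[_ /andP[/eqP-> _]].
Qed.

Lemma Q_adj_copy i (p q : 'I_8) :
  Q_adj (copy_vertex i p) (copy_vertex i q) -> HUV_adj (val p, val q).
Proof.
rewrite /Q_adj /= eqxx /= => /andP[pq /orP[Hpq | /andP[]]].
  by apply/orP; case/orP: Hpq => h; [left | right]; rewrite in_cons h orbT.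
move: pq; case: p q => [p p8] [q q8]; rewrite /isUV /=.
case: p p8 => [|[|p]] p8; case: q q8 => [|[|q]] q8 //=;
  by rewrite (bool_irrelevance p8 q8) eqxx.
Qed.

Lemma count_in_L (s : seq V) : uniq s -> count in_L s <= lpar k.
Proof.
move=> us; rewrite -[lpar k](size_enum_ord (lpar k)) -(size_map (fun j => inl (inl j) : V)).
apply: count_le_size_uniq => // -[[l | //] | //] _ _.
by apply/mapP; exists l; rewrite ?mem_enum.
Qed.

Variable s : seq V.
Hypothesis s_uniq : uniq s.
Hypothesis s_cover : forall x, x \in s.
Hypothesis s_sorted : sorted (@Q_adj k) s.

Definition breakpoints : seq V :=
  if s is x0 :: t then
    x0 :: last x0 t :: [seq e.1 | e <- path_edges s & in_L e.2] ++ [seq e.2 | e <- path_edges s & in_L e.1]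
  else [::].

Lemma size_breakpoints : size breakpoints <= 2 + 2 * lpar k.
Proof.
rewrite /breakpoints; case: s s_uniq => // x0 t us.
rewrite /= size_cat !size_map !size_filter mul2n -addnn !addSn !add0n !ltnS.
have snd := leq_trans (count_zip_snd in_L _ _) (count_behead in_L (x0 :: t)).
by apply: leq_add; apply: leq_trans (count_in_L us); [exact: snd | exact: count_zip_fst].
Qed.

Lemma breakpoint_neighbours x : x \notin breakpoints ->
  [/\ x != head x s, x != last x s,
      forall y, (y, x) \in path_edges s -> ~~ in_L y &
      forall y, (x, y) \in path_edges s -> ~~ in_L y].
Proof.
rewrite /breakpoints; case: s s_cover => [/(_ x) // | x0 t _].
rewrite !inE mem_cat !negb_or => /and4P[x0x xl nfst nsnd]; split => // y yx.
  by apply: contra nsnd => Ly; apply/mapP; exists (y, x); rewrite ?mem_filter ?Ly.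
by apply: contra nfst => Ly; apply/mapP; exists (x, y); rewrite ?mem_filter ?Ly.
Qed.

Definition copy_edges (i : 'I_(mpar k)) : seq (nat * nat) :=
  [seq (position e.1, position e.2) | e <- path_edges s & in_copy i e.1 && in_copy i e.2].

Lemma count_copy_edges i (P : pred (nat * nat)) :
  count P (copy_edges i) =
  count (fun e => in_copy i e.1 && in_copy i e.2 && P (position e.1, position e.2)) (path_edges s).
Proof. by rewrite count_map count_filter; apply: eq_count => e; rewrite andbC. Qed.

Lemma copy_edges_HUV i : all HUV_adj (copy_edges i).
Proof.
apply/allP => ? /mapP[[x y]]; rewrite mem_filter /= => /andP[/andP[ix iy] xy] ->.
have := path_edges_sorted s_sorted xy.
by case/in_copyP: ix => p ->; case/in_copyP: iy => q ->; apply: Q_adj_copy.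
Qed.

Lemma copy_edges_within i X : count (within X) (copy_edges i) <= (size X).-1.
Proof.
pose inX x := in_copy i x && (position x \in X).
rewrite count_copy_edges; apply: leq_trans (_ : count (fun e => inX e.1 && inX e.2) (path_edges s) <= _).
  by apply: sub_count => -[x y]; rewrite /inX /within /=; case: in_copy; case: in_copy.
apply: leq_trans (count_path_edges_within _ _) _; rewrite -!subn1 leq_sub2r //.
rewrite -(size_map (fun n => copy_vertex i (inord n))).
apply: count_le_size_uniq => // x _ /andP[/in_copyP[p ->] pX].
by apply/mapP; exists (val p); rewrite ?inord_val.
Qed.

Lemma copy_edges_degree i (p : 'I_8) : 2 <= p -> copy_vertex i p \notin breakpoints ->
  2 <= count (incident p) (copy_edges i).
Proof.
move=> p_int /breakpoint_neighbours[nhead nlast nLpred nLsucc].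
have [y yx] := path_edges_pred (s_cover _) nhead.
have [z xz] := path_edges_succ (s_cover _) nlast.
have adj_yx := path_edges_sorted s_sorted yx; have adj_xz := path_edges_sorted s_sorted xz.
have iy : in_copy i y by apply: (Q_adj_internal p_int (nLpred _ yx)); rewrite adj_yx.
have iz : in_copy i z by apply: (Q_adj_internal p_int (nLsucc _ xz)); rewrite adj_xz orbT.
rewrite count_copy_edges; apply: (count_ge2 (uniq_path_edges s_uniq) yx xz).
- by apply: contraTneq adj_yx => -[-> _]; exact: Q_adj_irrefl.
- by rewrite /= iy /in_copy /= eqxx /incident /= eqxx orbT.
- by rewrite /= iz /in_copy /= eqxx /incident /= eqxx.
Qed.

Lemma copy_meets_breakpoints i : has (in_copy i) breakpoints.
Proof.
apply/negPn/negP => /hasPn no_bp.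
apply: (@HUV_no_internal_cover (edge_mult (copy_edges i))) => [p /andP[p2 p8] | X].
  rewrite weight_edge_mult ?copy_edges_HUV //; last by move=> a b; rewrite /incident orbC.
  apply: (copy_edges_degree (p := Ordinal p8)) => //.
  by apply/negP => /no_bp; rewrite /in_copy /= eqxx.
rewrite weight_edge_mult ?copy_edges_HUV ?copy_edges_within //.
by move=> a b; rewrite /within andbC.
Qed.

Lemma mpar_le_breakpoints : mpar k <= size breakpoints.
Proof.
rewrite -(size_enum_ord (mpar k)) -(size_map Some) -(size_map copy_of breakpoints).
apply: uniq_leq_size; first by rewrite map_inj_uniq ?enum_uniq //; move=> a b [].
move=> _ /mapP[i _ ->]; have /hasP[x bx /eqP ix] := copy_meets_breakpoints i.
by apply/mapP; exists x.
Qed.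

End Construction.

Lemma card_QVert k : #|QVert k| = 2 * k + 1.
Proof. by rewrite !card_sum card_prod !card_ord /rpar /mpar /lpar; lia. Qed.

Lemma breakpoint_budget k : 29 <= k -> 2 + 2 * lpar k < mpar k.
Proof. by rewrite /mpar /lpar; lia. Qed.

Theorem lemma5p4 (k : nat) (hk : 29 <= k) :
  #|QVert k| = 2 * k + 1 /\
  ~ (exists s : seq (QVert k), hamiltonian_path (@Q_adj k) s).
Proof.
split; first exact: card_QVert.
move=> [s [s_uniq s_cover s_sorted]].
have := leq_trans (mpar_le_breakpoints s_uniq s_cover s_sorted) (size_breakpoints s_uniq).
by rewrite leqNgt breakpoint_budget.
Qed.
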